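(* Let $k\ge1$ and let $F$ be a 2-factor on $3k$ vertices. The bipartite construction $B$ with ratio $\frac13$ on $3k$ vertices contains a copy of $F$ with at least $2k-1$ red edges and a copy of $F$ with at least $2k-1$ blue edges.
   Context: A 2-factor on $N$ vertices is a 2-regular graph on $N$ vertices. The bipartite construction with ratio $\rho$ on $N$ vertices is the red/blue-coloring of $K_N$ obtained by partitioning the vertices into $X\cup Y$ with $|X|=\rho N$, coloring all edges touching $X$ with one color and all edges inside $Y$ with the other color (either assignment of red/blue). A copy of $F$ is a subgraph isomorphic to $F$. *)

From mathcomp Require Import all_boot all_fingroup.
Set Implicit Arguments. Unset Strict Implicit. Unset Printing Implicit Defensive.

Definition two_factor (n : nat) (F : rel 'I_n) : Prop :=
  [/\ symmetric F, irreflexive F & forall v : 'I_n, #|[set u | F v u]| = 2].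

(* Red/blue colourings of K_n: [c x y] is the colour of edge {x,y}
   (true = red, false = blue); only its values on x != y matter. *)

Definition bip_coloring (n : nat) (X : {set 'I_n}) (colX : bool) :
    'I_n -> 'I_n -> bool :=
  fun x y => if (x \in X) || (y \in X) then colX else ~~ colX.

(* A copy of a spanning graph F in K_n is the image of F under a permutation
   f of the vertices; this counts the edges of that copy having colour col
   (each edge {u,v} of F, u < v, is counted once). *)
Definition copy_col_edges (n : nat) (F : rel 'I_n) (f : {perm 'I_n})
    (c : 'I_n -> 'I_n -> bool) (col : bool) : nat :=
  #|[set p : 'I_n * 'I_n | [&& p.1 < p.2, F p.1 p.2 & c (f p.1) (f p.2) == col]]|.

(** Pull the colouring back along a permutation f of the vertices: the copy
   of F has the colour of X on exactly the edges touching S := f^-1(X), and the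
   other colour on the edges avoiding S.  For a 2-factor on 3k vertices and
   |S| = k, the edges touching S number 2k minus the edges inside S, and the
   edges avoiding S number k plus the edges inside S (all counts below are of
   ordered pairs, hence doubled).  An independent k-set exists greedily (each
   chosen vertex excludes at most three), and a k-set spanning at least k - 1
   edges is grown one vertex at a time, always along an edge leaving the
   current set when there is one; a set that no edge leaves spans as many
   edges as it has vertices. *)

From mathcomp Require Import all_boot all_fingroup.
From mathcomp Require Import zify.
Set Implicit Arguments. Unset Strict Implicit. Unset Printing Implicit Defensive.

Lemma card_pairs_swap (T : finType) (P : rel T) :
  #|[set p : T * T | P p.1 p.2]| = #|[set p : T * T | P p.2 p.1]|.
Proof.
have swap_inj : injective (fun p : T * T => (p.2, p.1)) by move=> [a b] [c d] [-> ->].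
by rewrite -(card_preimset _ swap_inj); apply: eq_card => p; rewrite !inE.
Qed.

Lemma card_pairs_sum (T : finType) (P : rel T) :
  #|[set p : T * T | P p.1 p.2]| = \sum_u #|[set v | P u v]|.
Proof.
transitivity (\sum_u \sum_(v | P u v) 1).
  by rewrite pair_big_dep /= sum1dep_card; apply: eq_card => p; rewrite !inE.
by apply: eq_bigr => u _; rewrite sum1dep_card.
Qed.

Lemma card_ordered_pairs_sym n (Q : rel 'I_n) : symmetric Q -> irreflexive Q ->
  2 * #|[set p : 'I_n * 'I_n | (p.1 < p.2) && Q p.1 p.2]| =
  #|[set p : 'I_n * 'I_n | Q p.1 p.2]|.
Proof.
move=> symQ irrQ.
rewrite -(cardsID [set p : 'I_n * 'I_n | p.1 < p.2] [set p | Q p.1 p.2]).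
have -> : [set p : 'I_n * 'I_n | Q p.1 p.2] :&: [set p : 'I_n * 'I_n | p.1 < p.2]
          = [set p : 'I_n * 'I_n | (p.1 < p.2) && Q p.1 p.2].
  by apply/setP => p; rewrite !inE andbC.
have -> : [set p : 'I_n * 'I_n | Q p.1 p.2] :\: [set p : 'I_n * 'I_n | p.1 < p.2]
          = [set p : 'I_n * 'I_n | (p.2 < p.1) && Q p.2 p.1].
  apply/setP => -[a b]; rewrite !inE /= symQ.
  case: (ltngtP a b) => [//|//|/val_inj->]; by rewrite irrQ.
by rewrite -(card_pairs_swap (fun a b : 'I_n => (a < b) && Q a b)) mul2n addnn.
Qed.

Lemma perm_preimset (T : finType) (A B : {set T}) :
  #|A| = #|B| -> exists f : {perm T}, f @^-1: B = A.
Proof.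
move cardAdB: #|A :\: B| => m; elim: m A cardAdB => [|m IH] A cardAdB cardAB.
  have subAB : A \subset B by rewrite -setD_eq0 -cards_eq0 cardAdB.
  have /eqP -> : A == B by rewrite eqEcard subAB cardAB leqnn.
  by exists 1%g; apply/setP => u; rewrite inE perm1.
have /set0Pn [a] : A :\: B != set0 by rewrite -card_gt0 cardAdB.
rewrite inE => /andP [aB aA].
have /set0Pn [b] : B :\: A != set0.
  by rewrite -card_gt0; have := cardsID A B; have := cardsID B A; rewrite setIC; lia.
rewrite inE => /andP [bA bB].
have ab : a != b by apply: contraNneq aB => ->.
pose A' := b |: (A :\ a).
have cardA' : #|A'| = #|B|.
  by rewrite cardsU1 !inE (negbTE bA) andbF -cardAB (cardsD1 a A) aA.
have cardA'B : #|A' :\: B| = m.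
  have -> : A' :\: B = (A :\: B) :\ a.
    apply/setP => u; rewrite !inE.
    by case: (eqVneq u b) => [->|_]; rewrite ?bB ?andbF //= andbCA.
  by move: cardAdB; rewrite (cardsD1 a (A :\: B)) !inE aB aA; case.
have [g gA'] := IH A' cardA'B cardA'.
exists (tperm a b * g)%g; apply/setP => u; rewrite !inE permM.
move/setP/(_ (tperm a b u)): gA'; rewrite !inE => ->.
case: tpermP => [->|->|/eqP ua /eqP ub]; first by rewrite eqxx aA.
  by rewrite (negbTE ab) eqxx (negbTE bA).
by rewrite (negbTE ub) ua.
Qed.

Section RegularGraph.

Variables (T : finType) (F : rel T) (d : nat).
Hypotheses (symF : symmetric F) (irrF : irreflexive F)
  (regF : forall v, #|[set u | F v u]| = d).

Implicit Types S : {set T}.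

Definition arcs_from S := [set p : T * T | F p.1 p.2 && (p.1 \in S)].
Definition inner_arcs S := [set p : T * T | [&& F p.1 p.2, p.1 \in S & p.2 \in S]].
Definition touching_arcs S :=
  [set p : T * T | F p.1 p.2 && ((p.1 \in S) || (p.2 \in S))].
Definition avoiding_arcs S :=
  [set p : T * T | [&& F p.1 p.2, p.1 \notin S & p.2 \notin S]].
Definition nbhd S := [set v | [exists u in S, F u v]].

Lemma card_arcs_from S : #|arcs_from S| = d * #|S|.
Proof.
rewrite (card_pairs_sum (fun a b => F a b && (a \in S))) mulnC -sum_nat_const.
rewrite [RHS]big_mkcond; apply: eq_bigr => u _; case: ifP => uS.
  by rewrite -(regF u); apply: eq_card => v; rewrite !inE andbT.
by apply/eqP; rewrite cards_eq0; apply/eqP/setP => v; rewrite !inE andbF.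
Qed.

Lemma card_arcs_to S : #|[set p : T * T | F p.1 p.2 && (p.2 \in S)]| = d * #|S|.
Proof.
rewrite (card_pairs_swap (fun a b => F a b && (b \in S))) -card_arcs_from.
by apply: eq_card => p; rewrite !inE symF.
Qed.

Lemma card_touching_arcs S : #|touching_arcs S| + #|inner_arcs S| = 2 * d * #|S|.
Proof.
rewrite -mulnA mul2n.
have := cardsUI (arcs_from S) [set p : T * T | F p.1 p.2 && (p.2 \in S)].
rewrite card_arcs_from card_arcs_to addnn => <-.
congr (_ + _); apply: eq_card => p; rewrite !inE.
  by rewrite -andb_orr.
by case: (F _ _).
Qed.

Lemma card_avoiding_arcs S :
  #|avoiding_arcs S| + 2 * d * #|S| = d * #|T| + #|inner_arcs S|.
Proof.
rewrite -card_touching_arcs addnA; congr (_ + _).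
rewrite -(cardsT T) -card_arcs_from -(cardsID (touching_arcs S) (arcs_from setT)).
rewrite addnC; congr (_ + _); apply: eq_card => p; rewrite !inE ?andbT.
  by case: (F _ _).
by case: (F _ _); rewrite ?negb_or ?andbT.
Qed.

Lemma inner_arcsS S1 S2 : S1 \subset S2 -> inner_arcs S1 \subset inner_arcs S2.
Proof.
move=> sub12; apply/subsetP => p; rewrite !inE.
by case/and3P => -> /(subsetP sub12) -> /(subsetP sub12) ->.
Qed.

Lemma card_inner_arcs_closed S : nbhd S \subset S -> #|inner_arcs S| = d * #|S|.
Proof.
move=> closedS; rewrite -card_arcs_from; apply: eq_card => -[u v]; rewrite !inE /=.
case Fuv: (F u v); case uS: (u \in S) => //=.
by apply: (subsetP closedS); rewrite inE; apply/existsP; exists u; rewrite uS.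
Qed.

Lemma card_inner_arcs_grow S u x : u \in S -> x \notin S -> F u x ->
  #|inner_arcs S| + 2 <= #|inner_arcs (x |: S)|.
Proof.
move=> uS xS Fux.
have xu_new : (x, u) \notin inner_arcs S by rewrite inE (negbTE xS) andbF.
have ux_new : (u, x) \notin (x, u) |: inner_arcs S.
  rewrite !inE (negbTE xS) !andbF orbF xpair_eqE.
  by apply: contraNN xS => /andP [/eqP <- _].
suff /subset_leq_card : (u, x) |: ((x, u) |: inner_arcs S) \subset inner_arcs (x |: S).
  by rewrite !cardsU1 ux_new xu_new; lia.
apply/subsetP => p; rewrite !inE.
case/or3P => [/eqP-> | /eqP-> | /and3P [-> -> ->]]; rewrite ?orbT //=.
- by rewrite Fux eqxx uS !orbT.
- by rewrite symF Fux eqxx uS !orbT.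
Qed.

Lemma card_nbhd S : #|nbhd S| <= d * #|S|.
Proof.
rewrite -card_arcs_from; apply: leq_trans (leq_imset_card snd _).
apply/subset_leq_card/subsetP => v; rewrite inE => /exists_inP [u uS Fuv].
by apply/imsetP; exists (u, v); rewrite // inE Fuv.
Qed.

Lemma exists_notin S : #|S| < #|T| -> exists w, w \notin S.
Proof.
move=> ltST; have : ~~ ([set: T] \subset S).
  by rewrite subTset; apply: contraTneq ltST => ->; rewrite cardsT ltnn.
by case/subsetPn => w; exists w.
Qed.

Lemma exists_independent_set m : d.+1 * m <= #|T| ->
  exists S, #|S| = m /\ inner_arcs S = set0.
Proof.
elim: m => [|m IH] le_m.
  by exists set0; rewrite cards0; split=> //; apply/setP => p; rewrite !inE !andbF.
have [S [cardS indS]] := IH (leq_trans (leq_mul (leqnn _) (leqnSn m)) le_m).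
have [w] : exists w, w \notin S :|: nbhd S.
  apply: exists_notin; apply: leq_ltn_trans (leq_card_setU S (nbhd S)).1 _.
  by have := card_nbhd S; rewrite cardS; lia.
rewrite inE negb_or => /andP [wS wN].
exists (w |: S); split; first by rewrite cardsU1 wS cardS.
have indS' u v : u \in S -> v \in S -> ~~ F u v.
  by move=> uS vS; apply/negP => Fuv; move/setP/(_ (u, v)): indS; rewrite !inE Fuv uS vS.
have wN' u : u \in S -> ~~ F u w.
  by move=> uS; apply: contra wN => Fuw; rewrite inE; apply/exists_inP; exists u.
apply/setP => -[u v]; rewrite !inE /=.
case: (eqVneq u w) => [->|_]; case: (eqVneq v w) => [->|_] /=.
- by rewrite irrF.
- by case vS: (v \in S); rewrite ?andbF // symF (negbTE (wN' v vS)).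
- by case uS: (u \in S); rewrite ?andbF // (negbTE (wN' u uS)).
- by case uS: (u \in S); case vS: (v \in S); rewrite ?andbF // (negbTE (indS' u v uS vS)).
Qed.

Lemma exists_dense_set m : 1 < d -> m < #|T| ->
  exists S, #|S| = m.+1 /\ 2 * m <= #|inner_arcs S|.
Proof.
move=> d_gt1; elim: m => [|m IH] lt_m.
  have [w _] : exists w, w \notin (set0 : {set T}) by apply: exists_notin; rewrite cards0.
  by exists [set w]; rewrite cards1.
have [S [cardS denseS]] := IH (ltnW lt_m).
have [closedS | /subsetPn [x]] := boolP (nbhd S \subset S).
  have [w wS] : exists w, w \notin S by apply: exists_notin; rewrite cardS.
  exists (w |: S); split; first by rewrite cardsU1 wS cardS.
  have := subset_leq_card (inner_arcsS (subsetUr [set w] S)).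
  by rewrite card_inner_arcs_closed // cardS; nia.
rewrite inE => /exists_inP [u uS Fux] xS.
exists (x |: S); split; first by rewrite cardsU1 xS cardS.
by have := card_inner_arcs_grow uS xS Fux; lia.
Qed.

End RegularGraph.

Lemma double_copy_col_edges n (F : rel 'I_n) (f : {perm 'I_n})
    (c : 'I_n -> 'I_n -> bool) col :
  symmetric F -> irreflexive F -> (forall x y, c x y = c y x) ->
  2 * copy_col_edges F f c col =
  #|[set p : 'I_n * 'I_n | F p.1 p.2 && (c (f p.1) (f p.2) == col)]|.
Proof.
move=> symF irrF symc.
rewrite -(card_ordered_pairs_sym (Q := fun a b => F a b && (c (f a) (f b) == col))).
- by congr (2 * #|_|); apply/setP => p; rewrite !inE.
- by move=> a b; rewrite symF symc.
- by move=> a; rewrite irrF.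
Qed.

Section BipartiteCopy.

Variables (n : nat) (F : rel 'I_n) (X : {set 'I_n}) (colX : bool) (f : {perm 'I_n}).
Hypotheses (symF : symmetric F) (irrF : irreflexive F).

Lemma bip_coloring_sym x y : bip_coloring X colX x y = bip_coloring X colX y x.
Proof. by rewrite /bip_coloring orbC. Qed.

Lemma copy_edges_colX :
  2 * copy_col_edges F f (bip_coloring X colX) colX = #|touching_arcs F (f @^-1: X)|.
Proof.
rewrite double_copy_col_edges //; last exact: bip_coloring_sym.
apply: eq_card => p; rewrite !inE /bip_coloring.
by case: (_ || _); case: colX; rewrite /= ?andbT ?andbF.
Qed.

Lemma copy_edges_not_colX :
  2 * copy_col_edges F f (bip_coloring X colX) (~~ colX) =
  #|avoiding_arcs F (f @^-1: X)|.
Proof.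
rewrite double_copy_col_edges //; last exact: bip_coloring_sym.
apply: eq_card => p; rewrite !inE /bip_coloring -negb_or.
by case: (_ || _); case: colX; rewrite /= ?andbT ?andbF.
Qed.

End BipartiteCopy.

Theorem lemma3p8 (k : nat) (F : rel 'I_(3 * k)) (X : {set 'I_(3 * k)})
    (colX : bool) :
  1 <= k -> two_factor F -> #|X| = k ->
  (exists f : {perm 'I_(3 * k)},
      2 * k - 1 <= copy_col_edges F f (bip_coloring X colX) true) /\
  (exists f : {perm 'I_(3 * k)},
      2 * k - 1 <= copy_col_edges F f (bip_coloring X colX) false).
Proof.
move=> k_gt0 [symF irrF regF] cardX.
suff copy_ex col : exists f, 2 * k - 1 <= copy_col_edges F f (bip_coloring X colX) col.
  by split; apply: copy_ex.
have cardT : #|'I_(3 * k)| = 3 * k by rewrite card_ord.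
have [-> | /negPf neq_col] := eqVneq col colX.
  have [S [cardS indS]] := exists_independent_set symF irrF regF (eq_leq (esym cardT)).
  have [f preX] := perm_preimset (etrans cardS (esym cardX)).
  exists f; have := copy_edges_colX X colX f symF irrF; rewrite preX.
  have := card_touching_arcs symF regF S; rewrite indS cards0 cardS; lia.
have -> : col = ~~ colX by case: col colX neq_col => -[].
have lt_k : k.-1 < #|'I_(3 * k)| by rewrite cardT; lia.
have [S [cardS denseS]] := exists_dense_set symF regF (isT : 1 < 2) lt_k.
have [f preX] := perm_preimset (etrans cardS (etrans (prednK k_gt0) (esym cardX))).
exists f; have := copy_edges_not_colX X colX f symF irrF; rewrite preX.
have := card_avoiding_arcs symF regF S; rewrite cardS cardT; lia.
Qed.
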